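(* Let $\mu_1,\mu_2,\mu$ be probability measures on a measurable space $(E,\mathscr B)$. Then for every $p>1$, $$\mathrm{Ent}(\mu_1|\mu_2)\le p\,\mathrm{Ent}(\mu_1|\mu)+(p-1)\log\int_E\Big(\frac{\mathrm d\mu}{\mathrm d\mu_2}\Big)^{\frac p{p-1}}\mathrm d\mu_2,$$ where the right-hand side is set to be $+\infty$ if $\frac{\mathrm d\mu_1}{\mathrm d\mu}$ or $\frac{\mathrm d\mu}{\mathrm d\mu_2}$ does not exist.
   Context: $\mathrm{Ent}(\nu|\lambda)=\int\log\frac{\mathrm d\nu}{\mathrm d\lambda}\,\mathrm d\nu$ if $\nu\ll\lambda$, and $+\infty$ otherwise. *)

From HB Require Import structures.
From mathcomp Require Import all_boot all_order all_algebra.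
From mathcomp Require Import all_classical all_reals all_analysis.
Set Implicit Arguments. Unset Strict Implicit. Unset Printing Implicit Defensive.
Import Order.TTheory GRing.Theory Num.Theory.
Local Open Scope classical_set_scope.
Local Open Scope ring_scope.
Local Open Scope ereal_scope.

(* Radon-Nikodym derivative d nu / d lam of probability measures
   (library version 'd _ '/d _ from charge.v; it is a genuine density
   whenever nu `<< lam). *)
Definition RN d (T : measurableType d) (R : realType)
  (nu lam : probability T R) : T -> \bar R :=
  Radon_Nikodym (charge_of_finite_measure nu) lam.

Definition Ent d (T : measurableType d) (R : realType)
  (nu lam : probability T R) : \bar R :=
  if pselect (nu `<< lam) then \int[nu]_x lne (RN nu lam x) else +oo.

From HB Require Import structures.
From mathcomp Require Import all_boot all_order all_algebra.
From mathcomp Require Import all_classical all_reals all_analysis.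
From mathcomp Require Import measurable_realfun measurable_fun_approximation.
From mathcomp Require Import ring lra.
Import Order.TTheory GRing.Theory Num.Theory.
Local Open Scope classical_set_scope.
Local Open Scope ring_scope.
Local Open Scope ereal_scope.

(* Write f = dmu1/dmu and h = dmu/dmu2, so that dmu1/dmu2 = f h by the chain
   rule.  With r = 1/(p-1) one has log (f h) = p log f + (p-1) log (h^r / f),
   and log lies below its tangent at any c > 0: log y <= y/c + log c - 1.
   Integrating against mu1 gives
     Ent(mu1|mu2) <= p Ent(mu1|mu) + (p-1) (c^-1 \int h^r/f dmu1 + log c - 1),
   while \int h^r/f dmu1 <= \int h^r dmu = \int h^(p/(p-1)) dmu2 =: c.
   All integrals make sense because x log x >= -1 bounds the mu1-integral of
   the negative part of log f by 1. *)

Section ln_inequalities.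
Context {R : realType}.
Local Open Scope ring_scope.

Lemma ln_le_subr1 {x : R} : 0 < x -> ln x <= x - 1.
Proof.
move=> x0; have := @le_ln1Dx R (x - 1).
by rewrite addrCA subrr addr0; apply; lra.
Qed.

Lemma ln_le_tangent {c y : R} : 0 < c -> 0 < y -> ln y <= y / c + ln c - 1.
Proof.
move=> c0 y0; have := ln_le_subr1 (divr_gt0 y0 c0).
by rewrite lnM ?posrE ?invr_gt0 // lnV ?posrE //; lra.
Qed.

Lemma mulr_ln_geN1 {r : R} : 0 <= r -> -1 <= r * ln r.
Proof.
rewrite le_eqVlt => /predU1P[<-|r0]; first by rewrite mul0r lerN10.
have rV0 : 0 < r^-1 by rewrite invr_gt0.
have := ler_wpM2l (ltW r0) (ln_le_subr1 rV0).
by rewrite lnV ?posrE // mulrBr divff ?gt_eqF //; lra.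
Qed.

Lemma ln_mul_le_tangent (p c a b : R) : 1 < p -> 0 < c -> 0 < a -> 0 < b ->
  ln (a * b) <=
    p * ln a + ((p - 1) / c * (b `^ (p - 1)^-1 / a) + (p - 1) * (ln c - 1)).
Proof.
move=> p1 c0 a0 b0; have p10 : 0 < p - 1 by rewrite subr_gt0.
set y := b `^ (p - 1)^-1 / a.
have y0 : 0 < y by rewrite divr_gt0 // powR_gt0.
have lnb : ln b = (p - 1) * (ln y + ln a).
  rewrite -lnM ?posrE // divfK ?gt_eqF // ln_powR.
  by rewrite mulrA divff ?gt_eqF // mul1r.
rewrite lnM ?posrE // lnb.
have := ler_wpM2l (ltW p10) (ln_le_tangent c0 y0); lra.
Qed.

End ln_inequalities.

Section lne.
Context {R : realType}.

Lemma measurable_lne : measurable_fun [set: \bar R] (@lne R).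
Proof.
have -> : @lne R = fun x =>
    if x <= 0 then -oo else if x == +oo then +oo else (ln (fine x))%:E.
  by apply/funext => -[r| |] //=; rewrite leNye.
apply: measurable_fun_ifT => //=; first exact: measurable_fun_lee.
apply: measurable_fun_ifT => //=; first exact: measurable_fun_eqe.
by apply/measurable_EFinP; apply: measurableT_comp.
Qed.

Lemma lne_gtNy {x : \bar R} : 0 < x -> -oo < lne x.
Proof.
by case: x => [r| |] //; rewrite lte_fin => r0; rewrite lne_EFin // ltNyr.
Qed.

Lemma maxeNlne_mul_le1 (r : R) : (0 <= r)%R -> maxe (- lne r%:E) 0 * r%:E <= 1.
Proof.
rewrite le_eqVlt => /predU1P[<-|r0]; first by rewrite mule0.
rewrite lne_EFin // -EFinN -EFin_max -EFinM lee_fin.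
have := mulr_ln_geN1 (ltW r0).
by case: (lerP (- ln r)%R 0%R) => _; rewrite ?mul0r //; lra.
Qed.

End lne.

Section integral_lemmas.
Context {d} {T : measurableType d} {R : realType}.
Context {mu : {measure set T -> \bar R}}.
Implicit Types (D : set T) (f g : T -> \bar R).

Lemma ae_le_integral {f g} : measurable_fun setT f -> measurable_fun setT g ->
  {ae mu, forall x, f x <= g x} -> \int[mu]_x f x <= \int[mu]_x g x.
Proof.
move=> mf mg fg; rewrite [leLHS]integralE [leRHS]integralE leeB //.
- apply: ae_ge0_le_integral => //; [exact: measurable_funepos..|].
  by apply: filterS fg => x fgx _; rewrite !funeposE le_max2 ?fgx.
- apply: ae_ge0_le_integral => //; [exact: measurable_funeneg..|].
  by apply: filterS fg => x fgx _; rewrite !funenegE le_max2 ?leeN2 ?fgx.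
Qed.

Lemma fin_num_integral_integrable {D f} : measurable D -> measurable_fun D f ->
  \int[mu]_(x in D) f x \is a fin_num -> mu.-integrable D f.
Proof.
move=> mD mf; rewrite integralE fin_numB => /andP[fp fn].
apply/integrableP; split => //.
rewrite (_ : (fun x => `|f x|) = f^\+ \+ f^\-); last by rewrite -fune_abse.
rewrite ge0_integralD //; last 2 first.
- exact: measurable_funepos.
- exact: measurable_funeneg.
by rewrite -(fineK fp) -(fineK fn) -EFinD ltry.
Qed.

End integral_lemmas.

Lemma null_dominates_ae {d} {T : measurableType d} {R : realType}
    {nu mu : {measure set T -> \bar R}} {P : T -> Prop} :
  nu `<< mu -> {ae mu, forall x, P x} -> {ae nu, forall x, P x}.
Proof.
move=> /null_content_dominatesP numu [A [mA A0 PA]]; exists A; split => //.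
exact: numu.
Qed.

(* Nonnegative and finite everywhere, not only almost everywhere, so that
   pointwise computations can be done in R. *)
Definition density {d} {T : measurableType d} {R : realType}
    (nu : {finite_measure set T -> \bar R})
    (lam : {sigma_finite_measure set T -> \bar R}) (x : T) : R :=
  fine (Radon_Nikodym_SigmaFinite.f nu lam x).

Section density.
Context {d} {T : measurableType d} {R : realType}.
Context {nu : {finite_measure set T -> \bar R}}
  {lam : {sigma_finite_measure set T -> \bar R}}.
Hypothesis nulam : nu `<< lam.

Lemma EFin_density x :
  (density nu lam x)%:E = Radon_Nikodym_SigmaFinite.f nu lam x.
Proof. by rewrite fineK // Radon_Nikodym_SigmaFinite.f_fin_num. Qed.

Lemma density_ge0 x : (0 <= density nu lam x)%R.
Proof. by rewrite -lee_fin EFin_density Radon_Nikodym_SigmaFinite.f_ge0. Qed.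

Lemma measurable_density : measurable_fun setT (density nu lam).
Proof.
apply/measurable_EFinP.
apply: (eq_measurable_fun (Radon_Nikodym_SigmaFinite.f nu lam)).
  by move=> x _; rewrite /= EFin_density.
exact: measurable_int (Radon_Nikodym_SigmaFinite.f_integrable nulam).
Qed.

Lemma measurable_lne_density :
  measurable_fun setT (fun x => lne (density nu lam x)%:E).
Proof.
apply: measurableT_comp measurable_lne _.
exact/measurable_EFinP/measurable_density.
Qed.

Lemma measurable_div_density (u : T -> R) : measurable_fun setT u ->
  measurable_fun setT (fun x => u x / density nu lam x)%R.
Proof.
move=> mfu; have -> : (fun x => u x / density nu lam x)%R =
    (fun x => u x * density nu lam x `^ (-1))%R.
  by apply/funext => x; rewrite powR_inv1 // density_ge0.
apply: measurable_funM => //.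
exact: measurableT_comp (measurable_powR _) measurable_density.
Qed.

Lemma ae_eq_Radon_Nikodym_density :
  ae_eq lam setT (Radon_Nikodym (charge_of_finite_measure nu) lam)
    (EFin \o density nu lam).
Proof.
apply: filterS (ae_eq_Radon_Nikodym_SigmaFinite nulam measurableT).
by move=> x SFE Tx; rewrite -SFE //= EFin_density.
Qed.

Lemma integral_poweR_Radon_Nikodym (s : R) :
  \int[lam]_x poweR (Radon_Nikodym (charge_of_finite_measure nu) lam x) s =
  \int[lam]_x (density nu lam x `^ s)%:E.
Proof.
apply: ae_eq_integral => //.
- exact: measurableT_comp (measurable_poweR _) _.
- apply/measurable_EFinP.
  exact: measurableT_comp (measurable_powR _) measurable_density.
- apply: filterS ae_eq_Radon_Nikodym_density => x /[apply] /= ->.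
  exact: poweR_EFin.
Qed.

Lemma integral_density (k : T -> \bar R) :
  (forall x, 0 <= k x) -> measurable_fun setT k ->
  \int[nu]_x k x = \int[lam]_x (k x * (density nu lam x)%:E).
Proof.
move=> k0 mk; under [RHS]eq_integral do rewrite EFin_density.
by rewrite Radon_Nikodym_SigmaFinite.change_of_variables.
Qed.

Lemma integral_density_setT : \int[lam]_x (density nu lam x)%:E = nu setT.
Proof.
under eq_integral do rewrite EFin_density.
by rewrite -Radon_Nikodym_SigmaFinite.f_integral.
Qed.

Lemma density_gt0_ae : {ae nu, forall x, (0 < density nu lam x)%R}.
Proof.
have mN : measurable (density nu lam @^-1` [set 0%R]).
  by rewrite -[X in measurable X]setTI; exact: measurable_density.
exists (density nu lam @^-1` [set 0%R]); split => //.
  rewrite (Radon_Nikodym_SigmaFinite.f_integral nulam mN).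
  rewrite (eq_integral (cst 0)) ?integral0 // => x.
  by rewrite inE /= -EFin_density => ->.
move=> x /=; rewrite lt_neqAle density_ge0 andbT eq_sym.
by move=> /negP/negbNE/eqP.
Qed.

Lemma integral_div_density_le (u : T -> R) :
  (forall x, 0 <= u x)%R -> measurable_fun setT u ->
  \int[nu]_x (u x / density nu lam x)%:E <= \int[lam]_x (u x)%:E.
Proof.
move=> u0 mfu; rewrite integral_density //; last first.
- by apply/measurable_EFinP; exact: measurable_div_density.
- by move=> x; rewrite lee_fin divr_ge0 // density_ge0.
apply: ge0_le_integral => //.
- by move=> x _; rewrite -EFinM lee_fin mulr_ge0 // ?divr_ge0 // density_ge0.
- apply/measurable_EFinP; apply: measurable_funM => //.
  + exact: measurable_div_density.
  + exact: measurable_density.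
- by apply/measurable_EFinP.
move=> x _; rewrite -EFinM lee_fin.
have [->|f0] := eqVneq (density nu lam x) 0%R; first by rewrite mulr0.
by rewrite divfK.
Qed.

End density.

Lemma density_chain_rule {d} {T : measurableType d} {R : realType}
    {nu mu : {finite_measure set T -> \bar R}}
    {la : {sigma_finite_measure set T -> \bar R}} :
  nu `<< mu -> mu `<< la ->
  {ae nu, forall x, density nu la x = (density nu mu x * density mu la x)%R}.
Proof.
move=> numu mula.
have := Radon_Nikodym_SigmaFinite.chain_rule numu mula measurableT.
move=> /(null_dominates_ae (null_dominates_trans numu mula)).
apply: filterS => x /(_ I).
rewrite /= -(EFin_density (null_dominates_trans numu mula)).
by rewrite -(EFin_density numu) -(EFin_density mula) -EFinM => -[].
Qed.

Section funeneg_lne_density.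
Context {d} {T : measurableType d} {R : realType}.
Context {nu lam : {finite_measure set T -> \bar R}}.
Hypothesis nulam : nu `<< lam.

Lemma integral_funeneg_lne_density_le :
  \int[nu]_x (fun x => lne (density nu lam x)%:E)^\- x <= lam setT.
Proof.
rewrite (integral_density nulam); last 2 first.
- by move=> x; exact: funeneg_ge0.
- exact/measurable_funeneg/measurable_lne_density.
apply: le_trans (_ : \int[lam]_x (cst 1 x) <= lam setT); last first.
  by rewrite integral_cst // mul1e.
apply: ge0_le_integral => //.
- by move=> x _; rewrite mule_ge0 ?lee_fin ?density_ge0 // funeneg_ge0.
- apply: emeasurable_funM.
    exact/measurable_funeneg/measurable_lne_density.
  exact/measurable_EFinP/measurable_density.
- by move=> x _; rewrite funenegE maxeNlne_mul_le1 // density_ge0.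
Qed.

End funeneg_lne_density.

Section entropy.
Context {d} {T : measurableType d} {R : realType} {nu lam : probability T R}.
Hypothesis nulam : nu `<< lam.

Lemma Ent_density : Ent nu lam = \int[nu]_x lne (density nu lam x)%:E.
Proof.
rewrite /Ent; case: pselect => /= [_|//]; apply: ae_eq_integral => //.
- apply: measurableT_comp measurable_lne _.
  by apply: measurable_int; apply: Radon_Nikodym_integrable.
- exact: measurable_lne_density.
- apply: filterS (null_dominates_ae nulam (ae_eq_Radon_Nikodym_density nulam)).
  by move=> x /(_ I) /= RNE _; rewrite /RN RNE.
Qed.

Lemma Ent_gtNy : -oo < Ent nu lam.
Proof.
rewrite Ent_density integralE.
set N := \int[nu]_x _^\- x.
have N_fin : N \is a fin_num.
  rewrite ge0_fin_numE; last by apply: integral_ge0 => x _; exact: funeneg_ge0.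
  apply: le_lt_trans (integral_funeneg_lne_density_le nulam) _.
  by rewrite ltey_eq fin_num_measure.
rewrite -(fineK N_fin); apply: (@lt_le_trans _ _ (- (fine N)%:E)).
  by rewrite -EFinN ltNyr.
by rewrite leeDr // integral_ge0 // => x _; exact: funepos_ge0.
Qed.

Lemma integral_powR_density_gt0 (s : R) :
  0 < \int[lam]_x (density nu lam x `^ s)%:E.
Proof.
have mpow : measurable_fun setT (fun x => (density nu lam x `^ s)%:E).
  apply/measurable_EFinP.
  exact: measurableT_comp (measurable_powR _) (measurable_density nulam).
rewrite lt_neqAle integral_ge0 ?andbT; last first.
  by move=> x _; rewrite lee_fin powR_ge0.
apply/negP => /eqP int0.
have pow0 : ae_eq lam setT (fun x => (density nu lam x `^ s)%:E) (cst 0).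
  apply/(ae_eq_integral_abs _ measurableT mpow).
  by under eq_integral do rewrite gee0_abs ?lee_fin ?powR_ge0 //; rewrite -int0.
have : \int[lam]_x (density nu lam x)%:E = 0.
  rewrite (ae_eq_integral (cst 0)) ?integral0 //.
  - exact/measurable_EFinP/measurable_density.
  - by apply: filterS pow0 => x /[apply] /= -[] /powR_eq0_eq0 ->.
rewrite (integral_density_setT nulam) /= probability_setT => -[] /eqP.
by rewrite oner_eq0.
Qed.

End entropy.

Section entropy_chain.
Context {d} {T : measurableType d} {R : realType}.
Context {mu1 mu mu2 : probability T R} {p : R}.
Hypotheses (p1 : (1 < p)%R) (mu1mu : mu1 `<< mu) (mumu2 : mu `<< mu2).

Let f := density mu1 mu.
Let h := density mu mu2.
Let k x := (h x `^ (p - 1)^-1 / f x)%R.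

Let p_sub1_gt0 : (0 < p - 1)%R.
Proof. by rewrite subr_gt0. Qed.

Let measurable_powR_h (s : R) : measurable_fun setT (fun x => h x `^ s)%R.
Proof.
exact: measurableT_comp (measurable_powR _) (measurable_density mumu2).
Qed.

Let measurable_k : measurable_fun setT k.
Proof. exact: (measurable_div_density mu1mu _ (measurable_powR_h _)). Qed.

Lemma integral_div_density_powR_le :
  \int[mu1]_x (k x)%:E <= \int[mu2]_x (h x `^ (p / (p - 1)))%:E.
Proof.
have h_ge0 x : (0 <= h x `^ (p - 1)^-1)%R by exact: powR_ge0.
apply: le_trans (integral_div_density_le mu1mu _ h_ge0 (measurable_powR_h _)) _.
rewrite (integral_density mumu2); last 2 first.
- by move=> x; rewrite lee_fin powR_ge0.
- exact/measurable_EFinP.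
rewrite le_eqVlt predU1l //; apply: eq_integral => x _.
rewrite /h -EFinM -{2}(powRr1 (density_ge0 mumu2 x)) -powRD; last first.
  by rewrite gt_eqF // addr_gt0 // invr_gt0.
by congr (_ `^ _)%:E; field; rewrite gt_eqF.
Qed.

Lemma lne_density_le_ae {c : R} : (0 < c)%R ->
  {ae mu1, forall x, lne (density mu1 mu2 x)%:E <=
    p%:E * lne (f x)%:E +
    (((p - 1) / c)%:E * (k x)%:E + ((p - 1) * (ln c - 1))%:E)}.
Proof.
move=> c0.
have f_gt0 := density_gt0_ae mu1mu.
have h_gt0 := null_dominates_ae mu1mu (density_gt0_ae mumu2).
have chain := density_chain_rule mu1mu mumu2.
apply: filterS3 f_gt0 h_gt0 chain => x f0 h0 ->.
rewrite !lne_EFin ?mulr_gt0 // -!EFinM -!EFinD lee_fin.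
exact: ln_mul_le_tangent.
Qed.

Lemma Ent_le_tangent {c : R} : (0 < c)%R ->
  Ent mu1 mu \is a fin_num -> \int[mu1]_x (k x)%:E \is a fin_num ->
  Ent mu1 mu2 <= p%:E * Ent mu1 mu +
    (((p - 1) / c)%:E * \int[mu1]_x (k x)%:E + ((p - 1) * (ln c - 1))%:E).
Proof.
move=> c0; rewrite (Ent_density (null_dominates_trans mu1mu mumu2)).
rewrite (Ent_density mu1mu) => A_fin J_fin.
have intA := fin_num_integral_integrable measurableT
  (measurable_lne_density mu1mu) A_fin.
have mk : measurable_fun setT (fun x => (k x)%:E) by exact/measurable_EFinP.
have intk := fin_num_integral_integrable measurableT mk J_fin.
have int_pA : mu1.-integrable setT (fun x => p%:E * lne (f x)%:E).
  exact: integrableZl.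
have int_tangent : mu1.-integrable setT
    (fun x => ((p - 1) / c)%:E * (k x)%:E + ((p - 1) * (ln c - 1))%:E).
  apply: integrableD => //; first exact: integrableZl.
  exact: finite_measure_integrable_cst.
apply: le_trans (ae_le_integral _ _ (lne_density_le_ae c0)) _.
- exact: measurable_lne_density (null_dominates_trans mu1mu mumu2).
- exact: measurable_int (integrableD measurableT int_pA int_tangent).
rewrite integralD // integralZl // integralD //; last 2 first.
- exact: integrableZl.
- exact: finite_measure_integrable_cst.
by rewrite integralZl // integral_cst //= probability_setT mule1.
Qed.

Lemma Ent_chain_le : Ent mu1 mu2 <=
  p%:E * Ent mu1 mu + (p - 1)%:E * lne (\int[mu2]_x (h x `^ (p / (p - 1)))%:E).
Proof.
set I := \int[mu2]_x _.
have I_gt0 : 0 < I := integral_powR_density_gt0 mumu2 _.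
have p_gt0 : (0 < p)%R := lt_trans ltr01 p1.
have := Ent_gtNy mu1mu; case A_eq : (Ent mu1 mu) => [a| |] // _; last first.
  rewrite gt0_muley ?lte_fin // addye ?leey //.
  by case: (lne I) (lne_gtNy I_gt0) => [r| |] // _; rewrite gt0_muley ?lte_fin.
have := integral_div_density_powR_le; rewrite -/I.
case I_eq : I I_gt0 => [c| |] // c_gt0 J_le; last first.
  by rewrite /= gt0_muley ?lte_fin // -EFinM addey ?leey.
rewrite lte_fin in c_gt0.
have J_fin : \int[mu1]_x (k x)%:E \is a fin_num.
  rewrite ge0_fin_numE ?(le_lt_trans J_le) ?ltry // integral_ge0 // => x _.
  by rewrite lee_fin divr_ge0 ?powR_ge0 ?density_ge0.
have A_fin : Ent mu1 mu \is a fin_num by rewrite A_eq.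
apply: le_trans (Ent_le_tangent c_gt0 A_fin J_fin) _.
rewrite A_eq lne_EFin // -(fineK J_fin) -!EFinM -!EFinD lee_fin.
have : ((p - 1) / c * fine (\int[mu1]_x (k x)%:E) <= p - 1)%R.
  by rewrite mulrAC ler_pdivrMr // ler_pM2l // -lee_fin fineK.
lra.
Qed.

End entropy_chain.

Theorem lemma2p1 (d : measure_display) (E : measurableType d) (R : realType)
    (mu1 mu2 mu : probability E R) (p : R) :
  (1 < p)%R ->
  Ent mu1 mu2 <=
    (if pselect (mu1 `<< mu /\ mu `<< mu2) then
       p%:E * Ent mu1 mu
       + (p - 1)%:E * lne (\int[mu2]_x poweR (RN mu mu2 x) (p / (p - 1)))
     else +oo).
Proof.
move=> p1; case: pselect => /= [[mu1mu mumu2]|_]; last exact: leey.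
by rewrite (integral_poweR_Radon_Nikodym mumu2); exact: Ent_chain_le.
Qed.
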